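(* For every integer $n\ge 2$, the lattice $M_n$ is a Shannon lattice.
   Context: $M_n$ is the lattice consisting of a smallest element, a largest element, and $n-2$ pairwise incomparable elements lying strictly between them. Lattices have order $\supseteq$, meet $\cap$, join $\uplus$. A polymatroid function on a finite lattice $L$ is $h:L\to\mathbb{R}$ that is non-negative, increasing ($x\supseteq y\Rightarrow h(x)\ge h(y)$) and submodular ($h(x)+h(y)\ge h(x\uplus y)+h(x\cap y)$). $h$ is entropic if there exist jointly distributed discrete random variables $(X_x)_{x\in L}$ such that for all $x,y$ the variable $X_{x\uplus y}$ and the pair $(X_x,X_y)$ are functions of each other, and $h(x)=H(X_x)$ (Shannon entropy) for all $x$. $L$ is a Shannon lattice if the set of polymatroid functions on $L$ equals the closure in $\mathbb{R}^L$ of the set of entropic functions on $L$. *)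

From HB Require Import structures.
From mathcomp Require Import all_boot all_order all_algebra.
From mathcomp Require Import reals exp.
Set Implicit Arguments. Unset Strict Implicit. Unset Printing Implicit Defensive.
Import Order.TTheory GRing.Theory Num.Theory.
Local Open Scope ring_scope.

(** A finite lattice is given by its carrier [T : finType], its order [le]
    ([le x y] means "y ⊇ x" in the paper's notation), its join [join]
    (the paper's ⊎) and its meet [meet] (the paper's ∩). *)

Section Shannon.
Variable R : realType.
Variable T : finType.
Variables (le : rel T) (join meet : T -> T -> T).

Definition polymatroid (h : T -> R) : Prop :=
  [/\ (forall x, 0 <= h x),
      (forall x y, le y x -> h y <= h x) &
      (forall x y, h (join x y) + h (meet x y) <= h x + h y)].

Definition is_distr (Omega : finType) (p : Omega -> R) : Prop :=
  (forall w, 0 <= p w) /\ \sum_(w : Omega) p w = 1.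

Definition prob (Omega : finType) (p : Omega -> R) (X : Omega -> nat) (v : nat) : R :=
  \sum_(w : Omega | X w == v) p w.

Definition entropy (Omega : finType) (p : Omega -> R) (X : Omega -> nat) : R :=
  \sum_(v <- undup [seq X w | w <- enum Omega]) - (prob p X v * ln (prob p X v)).

Definition entropic (h : T -> R) : Prop :=
  exists (Omega : finType) (p : Omega -> R) (X : T -> Omega -> nat),
    [/\ is_distr p,
        (forall x y,
           (exists f : nat -> nat -> nat,
              forall w, 0 < p w -> X (join x y) w = f (X x w) (X y w)) /\
           (exists g : nat -> nat * nat,
              forall w, 0 < p w -> (X x w, X y w) = g (X (join x y) w))) &
        (forall x, h x = entropy p (X x))].

Definition in_entropic_closure (h : T -> R) : Prop :=
  forall eps : R, 0 < eps ->
    exists g : T -> R, entropic g /\ forall x, `|h x - g x| < eps.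

Definition shannon_lattice : Prop :=
  forall h : T -> R, polymatroid h <-> in_entropic_closure h.

End Shannon.

(** The lattice M_n on the carrier 'I_n (n >= 2): 0 is the smallest element,
    1 is the largest element, and 2, ..., n-1 are pairwise incomparable
    elements strictly between them. *)
Section Mn.
Variable n : nat.

Definition Mn_le (x y : 'I_n) : bool :=
  [|| x == y, val x == 0%N | val y == 1%N].

Definition Mn_join (x y : 'I_n) : 'I_n :=
  if Mn_le x y then y else if Mn_le y x then x else insubd x 1%N.

Definition Mn_meet (x y : 'I_n) : 'I_n :=
  if Mn_le x y then x else if Mn_le y x then y else insubd x 0%N.
End Mn.

From HB Require Import structures.
From mathcomp Require Import all_boot all_order all_algebra.
From mathcomp Require Import reals exp sequences.
From mathcomp Require Import ring lra.
Set Implicit Arguments. Unset Strict Implicit. Unset Printing Implicit Defensive.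
Import Order.TTheory GRing.Theory Num.Theory.
Local Open Scope ring_scope.

(** Entropic functions are polymatroids: monotonicity holds because [X_y] is a
    function of [X_x] when [y] is below [x], and submodularity is the Shannon
    inequality H(A,B) + H(M) <= H(A) + H(B) for [M] a function of both [A] and
    [B], a consequence of [ln t <= t - 1]. Polymatroids form a closed set, so
    the closure of the entropic functions consists of polymatroids.

    Conversely, a polymatroid [h] on M_n is a nonnegative combination of level
    functions with values in {0, 1, 2}. Each level function is realised over a
    vector [z] uniform in F_p^2 (p >= n prime): an element observes nothing, a
    linear form z.1 + a z.2, or [z] itself, so its entropy is its level times
    [ln p]; distinct atoms use distinct slopes, hence jointly determine [z], as
    the join requires. Picking each scheme with probability its weight divided
    by [ln p], and a constant scheme otherwise, gives random variables of
    entropy [h + H(pi)], and H(pi) tends to 0 as p grows. *)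

Lemma ln_le_subr1 (R : realType) (x : R) : 0 < x -> ln x <= x - 1.
Proof. by move=> x0; have := @le_ln1Dx R (x - 1); rewrite addrCA subrr addr0; apply; lra. Qed.

Section Entropy.
Variables (R : realType) (Omega : finType) (p : Omega -> R).

Definition fiber_prob (T : eqType) (K : Omega -> T) (w : Omega) : R :=
  \sum_(v | K v == K w) p v.

Definition determines (T U : Type) (A : Omega -> T) (B : Omega -> U) : Prop :=
  forall w w', 0 < p w -> 0 < p w' -> A w = A w' -> B w = B w'.

Lemma fiber_probE (T : eqType) (K : Omega -> T) w :
  fiber_prob K w = \sum_v (if K v == K w then p v else 0).
Proof. by rewrite /fiber_prob big_mkcond. Qed.

Lemma fiber_prob_eq (T : eqType) (K : Omega -> T) w w' :
  K w = K w' -> fiber_prob K w = fiber_prob K w'.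
Proof. by rewrite /fiber_prob => ->. Qed.

Lemma sum_by_fibers (K : Omega -> nat) (F : Omega -> R) :
  \sum_w F w = \sum_(v <- undup [seq K w | w <- enum Omega]) \sum_(w | K w == v) F w.
Proof.
under [RHS]eq_bigr do rewrite big_mkcond.
rewrite exchange_big /=; apply: eq_bigr => w _.
rewrite (bigD1_seq (K w)) ?undup_uniq //; last first.
  by rewrite mem_undup; apply/mapP; exists w; rewrite ?mem_enum.
rewrite eqxx big1 /= ?addr0 // => v /negbTE.
by rewrite eq_sym => ->.
Qed.

Lemma entropyE (K : Omega -> nat) :
  entropy p K = - \sum_w p w * ln (fiber_prob K w).
Proof.
rewrite /entropy (sum_by_fibers K) -sumrN; apply: eq_bigr => v _.
rewrite -sumrN /prob big_distrl /= -sumrN; apply: eq_bigr => w /eqP Kw.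
by rewrite /fiber_prob Kw.
Qed.

Hypothesis p_distr : is_distr p.

Lemma p_ge0 w : 0 <= p w. Proof. by case: p_distr. Qed.

Lemma p_eq0 w : ~~ (0 < p w) -> p w = 0.
Proof. by move=> h; apply/eqP; rewrite eq_le p_ge0 andbT leNgt. Qed.

Lemma fiber_prob_ge (T : eqType) (K : Omega -> T) w : p w <= fiber_prob K w.
Proof. by rewrite /fiber_prob (bigD1 w) //= lerDl sumr_ge0 // => v _; apply: p_ge0. Qed.

Lemma fiber_prob_gt0 (T : eqType) (K : Omega -> T) w : 0 < p w -> 0 < fiber_prob K w.
Proof. by move=> /lt_le_trans; apply; apply: fiber_prob_ge. Qed.

Lemma fiber_prob_le1 (T : eqType) (K : Omega -> T) w : fiber_prob K w <= 1.
Proof.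
case: p_distr => _ <-; rewrite fiber_probE.
by apply: ler_sum => v _; case: ifP => // _; apply: p_ge0.
Qed.

Lemma entropy_ge0 (K : Omega -> nat) : 0 <= entropy p K.
Proof.
rewrite entropyE oppr_ge0 sumr_le0 // => w _.
by rewrite mulr_ge0_le0 ?p_ge0 // ln_le0 // fiber_prob_le1.
Qed.

Lemma fiber_prob_le_determined (T U : eqType) (A : Omega -> T) (B : Omega -> U) w :
  determines A B -> 0 < p w -> fiber_prob A w <= fiber_prob B w.
Proof.
move=> AB pw; rewrite !fiber_probE; apply: ler_sum => v _.
case: eqP => [Av|_]; last by case: ifP => // _; apply: p_ge0.
have [pv|pv] := boolP (0 < p v); last by rewrite (p_eq0 pv); case: ifP.
by rewrite (AB v w) // eqxx.
Qed.

Lemma entropy_le_determined (A B : Omega -> nat) :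
  determines A B -> entropy p B <= entropy p A.
Proof.
move=> AB; rewrite !entropyE lerN2; apply: ler_sum => w _.
have [pw|pw] := boolP (0 < p w); last by rewrite (p_eq0 pw) !mul0r.
rewrite ler_wpM2l ?p_ge0 // ler_ln ?posrE ?fiber_prob_gt0 //.
exact: fiber_prob_le_determined.
Qed.

Lemma fiber_prob_eq_determined (T U : eqType) (A : Omega -> T) (B : Omega -> U) w :
  determines A B -> determines B A -> 0 < p w -> fiber_prob A w = fiber_prob B w.
Proof.
by move=> AB BA pw; apply/eqP; rewrite eq_le !fiber_prob_le_determined.
Qed.

Section Submodular.
Variables (T1 T2 T3 : eqType) (A : Omega -> T1) (B : Omega -> T2) (M : Omega -> T3).
Hypotheses (AM : determines A M) (BM : determines B M).
Let AB w := (A w, B w).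

(* Grouping the [w] by the value of [A], each class meeting the support
   contributes P(A = A u), and [A u] and [B v] then have the same image under M. *)
Lemma fiber_ratio_sum_le v : 0 < p v ->
  \sum_(w | B w == B v) p w * fiber_prob A w / fiber_prob AB w <= fiber_prob M v.
Proof.
move=> pv; pose S u := \sum_(w | AB w == (A u, B v)) p w.
have -> : \sum_(w | B w == B v) p w * fiber_prob A w / fiber_prob AB w =
          \sum_u p u * (S u / S u).
  have split_A w : (if B w == B v then p w * fiber_prob A w / fiber_prob AB w else 0) =
      \sum_u (if AB w == (A u, B v) then p u * (p w / S u) else 0).
    case: (B w =P B v) => [Bw|Bw]; last first.
      by rewrite big1 // => u _; case: eqP => // -[_ /Bw].
    rewrite fiber_probE mulrAC mulrC big_distrl /=; apply: eq_bigr => u _.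
    rewrite /AB; case: (A u =P A w) => [Au|Au]; last first.
      by rewrite mul0r; case: eqP => // -[/esym].
    by rewrite Au Bw eqxx /S /fiber_prob /AB Au Bw.
  rewrite big_mkcond (eq_bigr _ (fun w _ => split_A w)) exchange_big /=.
  apply: eq_bigr => u _; rewrite mulrA big_mkcond mulr_sumr mulr_suml /=.
  by rewrite [RHS]big_mkcond; apply: eq_bigr => w _; rewrite mulrA.
rewrite fiber_probE; apply: ler_sum => u _.
have [pu|pu] := boolP (0 < p u); last by rewrite (p_eq0 pu) mul0r; case: ifP.
have [S0|S0] := eqVneq (S u) 0.
  by rewrite S0 mul0r mulr0; case: ifP => // _; apply: p_ge0.
have [w /andP[/eqP [Aw Bw] pw]] : exists w, (AB w == (A u, B v)) && (0 < p w).
  apply/existsP; apply: contraNT S0; rewrite negb_exists => /forallP noS.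
  by apply/eqP/big1 => w ABw; apply: p_eq0; have := noS w; rewrite ABw.
by rewrite divff // mulr1 (AM pu pw (esym Aw)) (BM pw pv Bw) eqxx.
Qed.

Lemma fiber_ratio_le1 :
  \sum_w p w * (fiber_prob A w * fiber_prob B w / (fiber_prob AB w * fiber_prob M w)) <= 1.
Proof.
have split_B w : p w * (fiber_prob A w * fiber_prob B w / (fiber_prob AB w * fiber_prob M w)) =
    \sum_v (if B v == B w then p v * (p w * fiber_prob A w / (fiber_prob AB w * fiber_prob M w))
            else 0).
  transitivity (fiber_prob B w *
    (p w * fiber_prob A w / (fiber_prob AB w * fiber_prob M w))); first by ring.
  by rewrite fiber_probE mulr_suml; apply: eq_bigr => v _; case: ifP; rewrite ?mul0r.
rewrite (eq_bigr _ (fun w _ => split_B w)) exchange_big /=; case: p_distr => _ <-.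
apply: ler_sum => v _.
have [pv|pv] := boolP (0 < p v); last first.
  by rewrite (p_eq0 pv) big1 // => w _; rewrite mul0r; case: ifP.
have -> : \sum_w (if B v == B w then
      p v * (p w * fiber_prob A w / (fiber_prob AB w * fiber_prob M w)) else 0) =
    p v / fiber_prob M v * \sum_(w | B w == B v) p w * fiber_prob A w / fiber_prob AB w.
  rewrite [in RHS]big_mkcond mulr_sumr; apply: eq_bigr => w _; rewrite eq_sym.
  case: (B w =P B v) => [Bw|]; last by rewrite mulr0.
  have [pw|pw] := boolP (0 < p w); last by rewrite (p_eq0 pw) !mul0r !mulr0.
  by rewrite (fiber_prob_eq (BM pw pv Bw)) invfM; ring.
rewrite -[leRHS]mulr1 -mulrA ler_wpM2l ?p_ge0 // mulrC.
by rewrite ler_pdivrMr ?mul1r ?fiber_prob_gt0 // fiber_ratio_sum_le.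
Qed.

Lemma sum_ln_fiber_submod :
  \sum_w p w * (ln (fiber_prob A w) + ln (fiber_prob B w)) <=
  \sum_w p w * (ln (fiber_prob AB w) + ln (fiber_prob M w)).
Proof.
rewrite -subr_ge0 -sumrB -oppr_le0 -sumrN.
apply: le_trans (_ : \sum_w p w * (fiber_prob A w * fiber_prob B w /
    (fiber_prob AB w * fiber_prob M w) - 1) <= 0).
  apply: ler_sum => w _.
  have [pw|pw] := boolP (0 < p w); last by rewrite (p_eq0 pw) !mul0r subrr oppr0.
  have pA := fiber_prob_gt0 A pw; have pB := fiber_prob_gt0 B pw.
  have pAB := fiber_prob_gt0 AB pw; have pM := fiber_prob_gt0 M pw.
  have := ln_le_subr1 (divr_gt0 (mulr_gt0 pA pB) (mulr_gt0 pAB pM)).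
  rewrite ln_div ?posrE ?mulr_gt0 // !lnM ?posrE // => /(ler_wpM2l (p_ge0 w)).
  by rewrite !mulrBr !mulrDr; lra.
under eq_bigr do rewrite mulrBr mulr1.
by rewrite sumrB (proj2 p_distr) subr_le0 fiber_ratio_le1.
Qed.
End Submodular.

Lemma entropy_submod (A B J M : Omega -> nat) :
  determines J (fun w => (A w, B w)) -> determines (fun w => (A w, B w)) J ->
  determines A M -> determines B M ->
  entropy p J + entropy p M <= entropy p A + entropy p B.
Proof.
move=> JAB ABJ AM BM; rewrite !entropyE -!opprD lerN2 -!big_split /=.
rewrite -(eq_bigr _ (fun w _ => mulrDr _ _ _)) -(eq_bigr _ (fun w _ => mulrDr _ _ _)).
apply: le_trans (sum_ln_fiber_submod AM BM) _; rewrite le_eqVlt; apply/predU1P; left.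
apply: eq_bigr => w _; have [pw|pw] := boolP (0 < p w); last by rewrite (p_eq0 pw) !mul0r.
by rewrite (fiber_prob_eq_determined JAB ABJ pw).
Qed.
End Entropy.

Section Polymatroid.
Variables (R : realType) (T : finType) (le : rel T) (join meet : T -> T -> T).
Hypothesis join_l : forall x y, le y x -> join y x = x.
Hypotheses (meet_le_l : forall x y, le (meet x y) x) (meet_le_r : forall x y, le (meet x y) y).

Lemma entropic_polymatroid (h : T -> R) : entropic join h -> polymatroid le join meet h.
Proof.
move=> [Omega [p [X [p_distr X_join hX]]]].
have det_pair x y : determines p (X (join x y)) (fun w => (X x w, X y w)).
  have [_ [g hg]] := X_join x y.
  by move=> w w' pw pw' e; rewrite (hg w pw) (hg w' pw') e.
have pair_det x y : determines p (fun w => (X x w, X y w)) (X (join x y)).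
  have [[f hf] _] := X_join x y.
  by move=> w w' pw pw' [ex ey]; rewrite (hf w pw) (hf w' pw') ex ey.
have det_le x y : le y x -> determines p (X x) (X y).
  move=> yx w w' pw pw' e.
  by have := det_pair y x w w' pw pw'; rewrite join_l // => /(_ e) [].
split=> [x|x y yx|x y]; rewrite !hX; first exact: entropy_ge0.
  exact: entropy_le_determined (det_le _ _ yx).
by apply: entropy_submod => //; apply: det_le.
Qed.

Lemma polymatroid_closed (h : T -> R) :
  (forall e : R, 0 < e -> exists2 g : T -> R, polymatroid le join meet g &
     forall x, `|h x - g x| < e) ->
  polymatroid le join meet h.
Proof.
move=> near; have near_le e : 0 < e -> exists2 g : T -> R,
    polymatroid le join meet g & forall x, g x - e <= h x <= g x + e.
  move=> e0; have [g pg hg] := near e e0; exists g => // y.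
  by have := hg y; rewrite ltr_norml => /andP[? ?]; apply/andP; split; lra.
split=> [x|x y yx|x y]; apply/ler_addgt0Pr => e e0.
- have [g [g0 _ _] hg] := near_le e e0.
  by have := hg x; have := g0 x; move=> ? /andP[? ?]; lra.
- have [g [_ gm _] hg] := near_le (e / 2) (divr_gt0 e0 (ltr0Sn _ _)).
  by have := gm x y yx; have := hg x; have := hg y => /andP[? ?] /andP[? ?] ?; lra.
- have [g [_ _ gs] hg] := near_le (e / 4) (divr_gt0 e0 (ltr0Sn _ _)).
  have := gs x y; have := hg x; have := hg y; have := hg (join x y); have := hg (meet x y).
  by move=> /andP[? ?] /andP[? ?] /andP[? ?] /andP[? ?] ?; lra.
Qed.

Lemma entropic_closure_polymatroid (h : T -> R) :
  in_entropic_closure join h -> polymatroid le join meet h.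
Proof.
move=> hc; apply: polymatroid_closed => e e0; have [g [eg hg]] := hc e e0.
by exists g => //; apply: entropic_polymatroid.
Qed.
End Polymatroid.

Lemma determined_fun (Omega : finType) (T : eqType) (U : Type) (u0 : U)
    (A : Omega -> T) (B : Omega -> U) :
  (forall w w', A w = A w' -> B w = B w') -> exists f : T -> U, forall w, B w = f (A w).
Proof.
move=> AB; exists (fun a => if [pick w | A w == a] is Some w then B w else u0) => w.
by case: pickP => [w' /eqP /AB //|/(_ w)]; rewrite eqxx.
Qed.

Section Kinds.
Variable p : nat.
Hypothesis p_prime : prime p.
Local Notation F := 'F_p.

Inductive kind := KConst | KLine of F | KFull.

Definition obs (k : kind) (z : F * F) : nat :=
  match k with KConst => 0 | KLine a => val (z.1 + a * z.2) | KFull => pickle z end.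

Definition level (k : kind) : nat :=
  match k with KConst => 0 | KLine _ => 1 | KFull => 2 end.

Definition refines (k k' : kind) : Prop :=
  forall z z', obs k z = obs k z' -> obs k' z = obs k' z'.

Lemma refines_full k : refines KFull k.
Proof. by move=> z z' /(pcan_inj pickleK) ->. Qed.

Lemma card_obs_fiber k z :
  #|[pred z' : F * F | obs k z' == obs k z]| = (p ^ (2 - level k))%N.
Proof.
case: k => [|a|] /=.
- by rewrite (@eq_card _ _ predT) // card_prod card_Fp.
- set c := z.1 + a * z.2.
  have -> : #|[pred z' : F * F | val (z'.1 + a * z'.2) == val c]| =
            #|[set (c - a * v, v) | v : F]|.
    apply: eq_card => -[u v]; rewrite inE; apply/eqP/imsetP => [/val_inj e|[v' _ [-> ->]]].
      by exists v => //; rewrite -e addrK.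
    by rewrite subrK.
  by rewrite card_imset ?card_Fp // => v v' [_ ->].
- by rewrite (@eq_card _ _ (pred1 z)) ?card1 // => z'; rewrite !inE (inj_eq (pcan_inj pickleK)).
Qed.

Lemma lines_meet (a b : F) z z' : a != b ->
  obs (KLine a) z = obs (KLine a) z' -> obs (KLine b) z = obs (KLine b) z' -> z = z'.
Proof.
move=> ab /val_inj ea /val_inj eb.
have e2 : z.2 = z'.2.
  apply: (mulfI (x := a - b)); first by rewrite subr_eq0.
  transitivity (z.1 + a * z.2 - (z.1 + b * z.2)); first by ring.
  by rewrite ea eb; ring.
by move: z z' ea e2 {eb} => [u v] [u' v'] /= + e2; rewrite e2 => /addIr ->.
Qed.
End Kinds.

Section Mixture.
Variables (R : realType) (p : nat) (S T : finType).
Hypothesis p_prime : prime p.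
Variables (sch : S -> T -> kind p) (pi : S -> R).
Hypothesis pi_distr : is_distr pi.
Local Notation F := 'F_p.

Definition mix_prob (w : S * (F * F)) : R := pi w.1 / (p ^ 2)%:R.

(* X_x = (s, obs_s(z)) for s drawn from [pi] and z uniform, encoded in [nat]. *)
Definition mix_var (x : T) (w : S * (F * F)) : nat := pickle (w.1, obs (sch w.1 x) w.2).

Lemma sum_mix (G : S * (F * F) -> R) : \sum_w G w = \sum_s \sum_z G (s, z).
Proof. by rewrite pair_bigA; apply: eq_bigr => -[]. Qed.

Lemma natr_expp_neq0 k : (p ^ k)%:R != 0 :> R.
Proof. by rewrite pnatr_eq0 -lt0n expn_gt0 prime_gt0. Qed.

Lemma sum_uniform_FF (c : R) : \sum_(z : F * F) c / (p ^ 2)%:R = c.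
Proof.
by rewrite sumr_const card_prod card_Fp // mulnn -[_ *+ _]mulr_natr divfK ?natr_expp_neq0.
Qed.

Lemma mix_prob_distr : is_distr mix_prob.
Proof.
case: pi_distr => pi_ge0 pi_sum; split=> [w|]; first by rewrite divr_ge0 ?ler0n.
by rewrite sum_mix -pi_sum; apply: eq_bigr => s _; rewrite /mix_prob /= sum_uniform_FF.
Qed.

Lemma mix_var_eq x w w' :
  (mix_var x w == mix_var x w') =
  (w.1 == w'.1) && (obs (sch w.1 x) w.2 == obs (sch w.1 x) w'.2).
Proof. by rewrite /mix_var (inj_eq (pcan_inj pickleK)) xpair_eqE; case: eqP => //= ->. Qed.

Lemma fiber_prob_mix_var x w :
  fiber_prob mix_prob (mix_var x) w = pi w.1 / (p ^ level (sch w.1 x))%:R.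
Proof.
case: w => s z; rewrite fiber_probE sum_mix (bigD1 s) //= [X in _ + X]big1 => [|s' s's].
  rewrite addr0; under eq_bigr do rewrite mix_var_eq eqxx /=.
  rewrite -big_mkcond /mix_prob /= sumr_const (card_obs_fiber p_prime) -[_ *+ _]mulr_natr.
  have l2 : (level (sch s x) <= 2)%N by case: (sch s x).
  rewrite -[in (p ^ 2)%N](subnK l2) expnD natrM.
  by field; rewrite !natr_expp_neq0.
by apply: big1 => z' _; rewrite mix_var_eq /= (negbTE s's).
Qed.

Lemma entropy_mix_var x : entropy mix_prob (mix_var x) =
  \sum_s - (pi s * ln (pi s)) + \sum_s pi s * (level (sch s x))%:R * ln p%:R.
Proof.
rewrite entropyE sum_mix -sumrN -big_split /=; apply: eq_bigr => s _.
under eq_bigr do rewrite fiber_prob_mix_var /mix_prob /= mulrAC.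
rewrite sum_uniform_FF.
have [ps|ps] := boolP (0 < pi s); last first.
  by rewrite (p_eq0 pi_distr ps) !mul0r oppr0 add0r.
rewrite ln_div ?posrE ?ltr0n ?expn_gt0 ?prime_gt0 // natrX lnXn ?ltr0n ?prime_gt0 //.
by rewrite -mulr_natr; ring.
Qed.

Variable join : T -> T -> T.
Hypotheses (sch_join_l : forall s x y, refines (sch s (join x y)) (sch s x))
           (sch_join_r : forall s x y, refines (sch s (join x y)) (sch s y)).
Hypothesis sch_join : forall s x y z z',
  obs (sch s x) z = obs (sch s x) z' -> obs (sch s y) z = obs (sch s y) z' ->
  obs (sch s (join x y)) z = obs (sch s (join x y)) z'.

Lemma mix_var_eqP x w w' :
  mix_var x w = mix_var x w' <-> w.1 = w'.1 /\ obs (sch w.1 x) w.2 = obs (sch w.1 x) w'.2.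
Proof.
by split=> [/eqP|[e1 e2]]; [rewrite mix_var_eq => /andP[/eqP -> /eqP] | apply/eqP;
  rewrite mix_var_eq e1 eqxx -e1 e2 eqxx].
Qed.

Lemma mix_entropic : entropic join (fun x => entropy mix_prob (mix_var x)).
Proof.
exists _, mix_prob, mix_var; split=> // [|x y].
  exact: mix_prob_distr.
split.
- have [f hf] : exists f : nat * nat -> nat, forall w,
      mix_var (join x y) w = f (mix_var x w, mix_var y w).
    apply: (@determined_fun _ _ _ 0%N (fun w => (mix_var x w, mix_var y w))).
    move=> w w' [/mix_var_eqP[e1 ex] /mix_var_eqP[_ ey]].
    by apply/mix_var_eqP; split=> //; apply: sch_join.
  by exists (fun a b => f (a, b)) => w _.
- have [g hg] : exists g : nat -> nat * nat, forall w,
      (mix_var x w, mix_var y w) = g (mix_var (join x y) w).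
    apply: (@determined_fun _ _ _ (0, 0)%N (mix_var (join x y))) => w w' /mix_var_eqP[e1 ej].
    have ex := sch_join_l ej; have ey := sch_join_r ej.
    by congr pair; apply/mix_var_eqP.
  by exists g => w _.
Qed.
End Mixture.

Section Mn_lattice.
Variable n : nat.
Implicit Types x y : 'I_n.

Definition Mn_atom x := (2 <= val x)%N.

Lemma Mn_join_l x y : Mn_le y x -> Mn_join y x = x.
Proof. by rewrite /Mn_join => ->. Qed.

Lemma val_insubd0 x : val (insubd x 0) = 0%N.
Proof. by rewrite val_insubd (leq_ltn_trans (leq0n x) (ltn_ord x)). Qed.

Lemma Mn_meet_le_l x y : Mn_le (Mn_meet x y) x.
Proof.
rewrite /Mn_meet /Mn_le; case: ifP => [|_]; first by rewrite eqxx.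
by case: ifP => [//|_]; rewrite val_insubd0 eqxx orbT.
Qed.

Lemma Mn_meet_le_r x y : Mn_le (Mn_meet x y) y.
Proof.
rewrite /Mn_meet /Mn_le; case: ifP => //= _.
by case: ifP => [|_]; [rewrite eqxx | rewrite val_insubd0 eqxx orbT].
Qed.

Lemma Mn_atoms_le x y : Mn_atom x -> Mn_atom y -> Mn_le x y = (x == y).
Proof. by move=> ax ay; rewrite /Mn_le (gtn_eqF (ltnW ax)) (gtn_eqF ay) !orbF. Qed.

Hypothesis n2 : (2 <= n)%N.

Definition Mn_bot : 'I_n := Ordinal (ltnW n2).
Definition Mn_top : 'I_n := Ordinal n2.

Lemma Mn_incomparable x y : ~~ Mn_le x y -> ~~ Mn_le y x ->
  [/\ Mn_atom x, Mn_atom y, x != y, Mn_join x y = Mn_top & Mn_meet x y = Mn_bot].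
Proof.
rewrite /Mn_join /Mn_meet => /negbTE lxy /negbTE lyx; rewrite lxy lyx.
move: lxy lyx; rewrite /Mn_le /Mn_atom => /norP[xy /norP[x0 y1]] /norP[_ /norP[y0 x1]].
split=> //.
- by move: x0 x1; case: (val x) => [|[]].
- by move: y0 y1; case: (val y) => [|[]].
- by apply: val_inj; rewrite val_insubd n2.
- by apply: val_inj; rewrite val_insubd0.
Qed.

Lemma Mn_le_join x y : Mn_le x (Mn_join x y) /\ Mn_le y (Mn_join x y).
Proof.
rewrite /Mn_join; case: ifP => lxy; first by rewrite /Mn_le eqxx.
case: ifP => lyx; first by rewrite /Mn_le eqxx.
by rewrite /Mn_le val_insubd n2 eqxx !orbT.
Qed.
End Mn_lattice.

Section Mn_schemes.
Variables (p n : nat) (i0 : 'I_n).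
Hypotheses (p_prime : prime p) (n_le_p : (n <= p)%N).
Local Notation F := 'F_p.

(* Levels (bottom, atom x, top) of the schemes: [Some None]: (1, 1, 1);
   [Some (Some None)]: (0, 1 except 0 at i0, 1); [Some (Some (Some f))]:
   (0, 1 + f x, 2); [None] is the constant scheme used to fill up the mass. *)
Definition Mn_scheme (s : option (option (option {ffun 'I_n -> bool}))) (x : 'I_n) : kind p :=
  match s with
  | None => KConst p
  | Some None => KLine 0
  | Some (Some None) =>
      if (val x == 0%N) || Mn_atom x && (x == i0) then KConst p else KLine 0
  | Some (Some (Some f)) =>
      if val x == 0%N then KConst p else if val x == 1%N then KFull p
      else if f x then KFull p else KLine (val x)%:R
  end.

Lemma Mn_scheme_mono s x y : Mn_le x y -> refines (Mn_scheme s y) (Mn_scheme s x).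
Proof.
case/or3P=> [/eqP -> //|/eqP x0|/eqP y1].
  by case: s => [[[f|]|]|] //= z z'; rewrite x0.
case: s => [[[f|]|]|] //=; rewrite y1 /=; first exact: refines_full.
by rewrite /Mn_atom y1 /=; case: ifP => // _ z z'.
Qed.

Lemma natr_Fp_inj (a b : nat) : (a < p)%N -> (b < p)%N -> (a%:R : F) = b%:R -> a = b.
Proof.
by move=> ap bp e; have := val_Fp_nat p_prime a; rewrite e val_Fp_nat // !modn_small.
Qed.

Lemma Mn_scheme_atoms s x y t z z' :
  Mn_atom x -> Mn_atom y -> x != y -> val t = 1%N ->
  obs (Mn_scheme s x) z = obs (Mn_scheme s x) z' ->
  obs (Mn_scheme s y) z = obs (Mn_scheme s y) z' ->
  obs (Mn_scheme s t) z = obs (Mn_scheme s t) z'.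
Proof.
rewrite /Mn_atom => ax ay xy t1.
have [x0 y0] : val x != 0%N /\ val y != 0%N by rewrite -!lt0n !(ltn_trans _ ax, ltn_trans _ ay).
have [x1 y1] : val x != 1%N /\ val y != 1%N by rewrite !neq_ltn ax ay !orbT.
case: s => [[[f|]|]|] //=; rewrite ?t1 ?(negbTE x0) ?(negbTE y0) ?(negbTE x1) ?(negbTE y1) /=.
  case: (f x) => [e _ //|]; case: (f y) => [_ e //|ex ey].
  suff -> : z = z' by [].
  apply: lines_meet ex ey; apply: contra xy => /eqP /natr_Fp_inj e.
  by apply/eqP/val_inj/e; apply: leq_trans n_le_p.
rewrite /Mn_atom ax ay t1 /=.
case: eqP => [xi|_ e _ //]; case: eqP => [yi|_ _ e //].
by rewrite xi yi eqxx in xy.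
Qed.

Lemma Mn_scheme_join (n2 : (2 <= n)%N) s x y z z' :
  obs (Mn_scheme s x) z = obs (Mn_scheme s x) z' ->
  obs (Mn_scheme s y) z = obs (Mn_scheme s y) z' ->
  obs (Mn_scheme s (Mn_join x y)) z = obs (Mn_scheme s (Mn_join x y)) z'.
Proof.
have [lxy|nxy] := boolP (Mn_le x y); first by rewrite Mn_join_l.
have [lyx|nyx] := boolP (Mn_le y x); first by rewrite /Mn_join (negbTE nxy) lyx.
have [ax ay xy -> _] := Mn_incomparable n2 nxy nyx.
exact: Mn_scheme_atoms.
Qed.

Lemma Mn_mix_entropic (R : realType) (n2 : (2 <= n)%N)
    (pi : option (option (option {ffun 'I_n -> bool})) -> R) :
  is_distr pi -> entropic (@Mn_join n) (fun x => entropy (mix_prob pi) (mix_var Mn_scheme x)).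
Proof.
move=> pi_distr; apply: mix_entropic => // [s x y|s x y|]; last exact: Mn_scheme_join.
  by apply: Mn_scheme_mono; case: (Mn_le_join n2 x y).
by apply: Mn_scheme_mono; case: (Mn_le_join n2 x y).
Qed.
End Mn_schemes.

Section Real_bounds.
Variable R : realType.

Lemma xlnx_ge_subr1 (y : R) : 0 <= y -> y - 1 <= y * ln y.
Proof.
rewrite le_eqVlt => /predU1P[<-|y0]; first by rewrite mul0r; lra.
have yV : 0 < y^-1 by rewrite invr_gt0.
have := ler_wpM2l (ltW y0) (ln_le_subr1 yV).
by rewrite lnV ?posrE // mulrBr mulfV ?gt_eqF //; lra.
Qed.

Lemma xlnx_ge_sqrt (x : R) : 0 <= x -> - (2 * Num.sqrt x) <= x * ln x.
Proof.
move=> x0; have r0 := sqrtr_ge0 x; rewrite -[in x * _](sqr_sqrtr x0).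
have [->|xn0] := eqVneq x 0; first by rewrite sqrtr0 expr0n /= mul0r mulr0 oppr0.
have rp : 0 < Num.sqrt x by rewrite sqrtr_gt0 lt_def xn0.
rewrite lnXn // expr2 -mulr_natr.
by have := ler_wpM2l r0 (xlnx_ge_subr1 r0); nra.
Qed.

Lemma sum_option (S : finType) (G : option S -> R) :
  \sum_(s : option S) G s = G None + \sum_(t : S) G (Some t).
Proof.
rewrite (bigD1 None) //=; congr (_ + _).
rewrite (reindex_omap Some id) /=; last by case.
by apply: eq_bigl => t; rewrite eqxx.
Qed.

Lemma sum_xlnx_le0 (S : finType) (pi : S -> R) :
  is_distr pi -> 0 <= \sum_s - (pi s * ln (pi s)).
Proof.
case=> pi_ge0 pi_sum; apply: sumr_ge0 => s _.
rewrite oppr_ge0 mulr_ge0_le0 ?ln_le0 // -pi_sum (bigD1 s) //= lerDl.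
by apply: sumr_ge0 => ? _.
Qed.

Lemma entropy_option_le (S : finType) (pi : option S -> R) (d : R) :
  0 <= d <= 1 -> pi None = 1 - d -> (forall t, 0 <= pi (Some t) <= d) ->
  \sum_s - (pi s * ln (pi s)) <= (1 + 2 * #|S|%:R) * Num.sqrt d.
Proof.
move=> /andP[d0 d1] piN piS; have s0 := sqrtr_ge0 d.
have s1 : Num.sqrt d <= 1 by rewrite -sqrtr1 ler_sqrt.
have dsd : d <= Num.sqrt d by rewrite -{1}(sqr_sqrtr d0) expr2; nra.
rewrite sum_option mulrDl mul1r lerD //.
  by rewrite piN; have := xlnx_ge_subr1 (_ : 0 <= 1 - d); lra.
have -> : 2 * #|S|%:R * Num.sqrt d = \sum_(t : S) 2 * Num.sqrt d.
  by rewrite sumr_const -mulr_natl; ring.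
apply: ler_sum => t _.
have /andP[t0 td] := piS t; have := xlnx_ge_sqrt t0.
have : Num.sqrt (pi (Some t)) <= Num.sqrt d by rewrite ler_sqrt.
lra.
Qed.
End Real_bounds.

Section Product_distribution.
Variables (R : realType) (I : finType) (q : I -> R).

Definition prod_bernoulli (f : {ffun I -> bool}) : R :=
  \prod_j (if f j then q j else 1 - q j).

Lemma prod_bernoulli_ge0 f : (forall j, 0 <= q j <= 1) -> 0 <= prod_bernoulli f.
Proof.
move=> q01; apply: prodr_ge0 => j _; have /andP[? ?] := q01 j.
by case: (f j); rewrite ?subr_ge0.
Qed.

Lemma sum_prod_bernoulli : \sum_f prod_bernoulli f = 1.
Proof.
rewrite /prod_bernoulli -(bigA_distr_bigA (fun j b => if b then q j else 1 - q j)) /=.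
by apply: big1 => j _; rewrite big_bool /= addrC subrK.
Qed.

Lemma sum_prod_bernoulli_true x :
  \sum_(f : {ffun I -> bool}) (if f x then prod_bernoulli f else 0) = q x.
Proof.
pose G j (b : bool) := if b then q j else if j == x then 0 else 1 - q j.
have GE (f : {ffun I -> bool}) : (if f x then prod_bernoulli f else 0) = \prod_j G j (f j).
  rewrite /prod_bernoulli (bigD1 x) //= [RHS](bigD1 x) //= /G eqxx.
  case: (f x); last by rewrite !mul0r.
  by congr (_ * _); apply: eq_bigr => j /negbTE ->.
rewrite (eq_bigr _ (fun f _ => GE f)) -(bigA_distr_bigA G) /= (bigD1 x) //= [X in _ * X]big1.
  by rewrite big_bool /G eqxx /= addr0 mulr1.
by move=> j /negbTE jx; rewrite big_bool /G jx /= addrC subrK.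
Qed.
End Product_distribution.

Section Decomposition.
Variables (R : realType) (n : nat) (h : 'I_n -> R).
Hypotheses (n2 : (2 <= n)%N) (h_poly : polymatroid (@Mn_le n) (@Mn_join n) (@Mn_meet n) h).
Local Notation bot := (Mn_bot n2).
Local Notation top := (Mn_top n2).

Lemma h_ge0 x : 0 <= h x. Proof. by case: h_poly. Qed.

Lemma h_bot_le x : h bot <= h x.
Proof. by case: h_poly => _ h_mono _; apply: h_mono; rewrite /Mn_le eqxx orbT. Qed.

Lemma h_le_top x : h x <= h top.
Proof. by case: h_poly => _ h_mono _; apply: h_mono; rewrite /Mn_le eqxx !orbT. Qed.

Lemma h_atoms_submod x y : Mn_atom x -> Mn_atom y -> x != y -> h top + h bot <= h x + h y.
Proof.
move=> ax ay xy.
have nxy : ~~ Mn_le x y by rewrite Mn_atoms_le // (negbTE xy).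
have nyx : ~~ Mn_le y x by rewrite Mn_atoms_le // eq_sym (negbTE xy).
have [_ _ _ join_top meet_bot] := Mn_incomparable n2 nxy nyx.
by case: h_poly => _ _ /(_ x y); rewrite join_top meet_bot.
Qed.

(* Non-atoms get the top value, so that a minimiser is an atom whenever M_n has one. *)
Definition atom_value x := if Mn_atom x then h x else h top.

Variable i0 : 'I_n.
Hypothesis i0_min : forall j, atom_value i0 <= atom_value j.

Definition height := h top - h bot.
Definition prod_mass := Num.min (atom_value i0 - h bot) (height / 2).
Definition excess j :=
  h j - h bot - prod_mass - (if j == i0 then 0 else height - 2 * prod_mass).
Definition atom_prob j := if Mn_atom j then excess j / prod_mass else 0.

(* h = h bot * (1,1,1) + (height - 2 prod_mass) * (0, 1 - [x == i0], 1)
       + prod_mass * E_f (0, 1 + f x, 2), with f x independent Bernoulli(atom_prob x). *)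
Definition scheme_weight (t : option (option {ffun 'I_n -> bool})) : R :=
  match t with
  | None => h bot
  | Some None => height - 2 * prod_mass
  | Some (Some f) => prod_mass * prod_bernoulli atom_prob f
  end.

Lemma prod_mass_bounds :
  [/\ 0 <= prod_mass, prod_mass <= height / 2 & prod_mass <= atom_value i0 - h bot].
Proof.
have := h_bot_le top; have := h_bot_le i0.
rewrite /prod_mass /height /atom_value le_min !ge_min !lexx !orbT.
by case: ifP => _ ? ?; split => //; apply/andP; split; lra.
Qed.

Lemma prod_mass_cases : prod_mass = atom_value i0 - h bot \/ prod_mass = height / 2.
Proof. by rewrite /prod_mass minEle; case: ifP; [left|right]. Qed.

Lemma excess_bounds j : Mn_atom j -> 0 <= excess j <= prod_mass.
Proof.
move=> aj; have [w0 w_height w_atom] := prod_mass_bounds.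
have := h_bot_le j; have := h_le_top j; have := i0_min j; rewrite {2}/atom_value aj.
have := prod_mass_cases; move: w_height w_atom; rewrite /excess /height.
have [ji|ji] := eqVneq j i0.
  by rewrite -ji /atom_value aj => ? ? [] ? *; apply/andP; split; lra.
have : h top + h bot <= h j + atom_value i0.
  rewrite /atom_value; case: ifP => ai; first exact: h_atoms_submod.
  by have := h_bot_le j; lra.
by move=> ? ? ? [] ? *; apply/andP; split; lra.
Qed.

Lemma prod_mass_atom_prob j : Mn_atom j -> prod_mass * atom_prob j = excess j.
Proof.
move=> aj; rewrite /atom_prob aj; have /andP[e0 em] := excess_bounds aj.
have [w0|w0] := eqVneq prod_mass 0; last by rewrite mulrC divfK.
by rewrite w0 mul0r; apply/eqP; rewrite eq_le e0 -w0 em.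
Qed.

Lemma atom_prob_bounds j : 0 <= atom_prob j <= 1.
Proof.
rewrite /atom_prob; case: ifP => aj; last by rewrite lexx ler01.
have /andP[e0 em] := excess_bounds aj; have [w0 _ _] := prod_mass_bounds.
have [->|wn0] := eqVneq prod_mass 0; first by rewrite invr0 mulr0 lexx ler01.
have wp : 0 < prod_mass by rewrite lt_def wn0.
by rewrite divr_ge0 ?ler_pdivrMr ?mul1r.
Qed.

Lemma scheme_weight_ge0 t : 0 <= scheme_weight t.
Proof.
have [w0 w_height _] := prod_mass_bounds.
case: t => [[f|]|] /=; last exact: h_ge0.
  by rewrite mulr_ge0 // prod_bernoulli_ge0 // => j; apply: atom_prob_bounds.
by move: w_height; rewrite /height; lra.
Qed.

Lemma scheme_weight_level_sum p x :
  \sum_t scheme_weight t * (level (Mn_scheme p i0 (Some t) x))%:R = h x.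
Proof.
rewrite sum_option sum_option /=.
have [x0|x0] := eqVneq (val x) 0%N.
  rewrite /= big1 => [|f _]; last by rewrite mulr0.
  by rewrite mulr0 mulr1 !addr0; congr h; apply: val_inj.
have [x1|x1] := eqVneq (val x) 1%N.
  rewrite /Mn_atom x1 /= -big_distrl -mulr_sumr sum_prod_bernoulli /=.
  by rewrite (_ : x = top); [rewrite /height; lra | apply: val_inj].
have ax : Mn_atom x by rewrite /Mn_atom; move: x0 x1; case: (val x) => [|[]].
rewrite ax /=.
have split_f f :
    prod_mass * prod_bernoulli atom_prob f *
      (level (if f x then KFull p else KLine (val x)%:R))%:R =
    prod_mass * prod_bernoulli atom_prob f +
      prod_mass * (if f x then prod_bernoulli atom_prob f else 0).
  by case: (f x); rewrite /= ?mulr0 ?addr0 ?mulr1 //; lra.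
rewrite (eq_bigr _ (fun f _ => split_f f)) big_split /= -!mulr_sumr.
rewrite sum_prod_bernoulli sum_prod_bernoulli_true mulr1 prod_mass_atom_prob // /excess mulr1.
by case: (x == i0); rewrite /= ?mulr0 ?mulr1; lra.
Qed.
End Decomposition.

Lemma exists_prime_ln_gt (R : realType) (n : nat) (B : R) :
  exists p, [/\ (n <= p)%N, prime p & B < ln p%:R].
Proof.
have [p bound_p p_prime] := prime_above (maxn n (Num.bound (expR B))).
exists p; split=> //; first by apply: leq_trans (ltnW bound_p); rewrite leq_maxl.
have expB_lt : expR B < p%:R.
  apply: lt_le_trans (archi_boundP (ltW (expR_gt0 B))) _.
  by rewrite ler_nat; apply: leq_trans (ltnW bound_p); rewrite leq_maxr.
by rewrite -ltr_expR lnK // posrE (lt_trans (expR_gt0 B)).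
Qed.

Section Approximation.
Variables (R : realType) (n : nat) (h : 'I_n -> R).
Hypotheses (n2 : (2 <= n)%N) (h_poly : polymatroid (@Mn_le n) (@Mn_join n) (@Mn_meet n) h).
Variable i0 : 'I_n.
Hypothesis i0_min : forall j, atom_value h n2 i0 <= atom_value h n2 j.
Local Notation weight := (scheme_weight h n2 i0).

Lemma Mn_mix_entropyE p (pi : option (option (option {ffun 'I_n -> bool})) -> R) x :
  prime p -> is_distr pi -> (forall t, pi (Some t) = weight t / ln p%:R) ->
  entropy (mix_prob pi) (mix_var (Mn_scheme p i0) x) = \sum_s - (pi s * ln (pi s)) + h x.
Proof.
move=> p_prime pi_distr piS; rewrite entropy_mix_var //; congr (_ + _).
have lnp : ln p%:R != 0 :> R by rewrite gt_eqF // ln_gt0 // ltr1n prime_gt1.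
rewrite sum_option /= mulr0 mul0r add0r -[RHS](scheme_weight_level_sum h_poly i0_min p x).
by apply: eq_bigr => t _; rewrite piS; field.
Qed.

Lemma polymatroid_approx eps : 0 < eps ->
  exists g : 'I_n -> R, entropic (@Mn_join n) g /\ forall x, `|h x - g x| < eps.
Proof.
move=> eps0; pose M := \sum_t weight t.
have weight_le_M t : weight t <= M.
  by rewrite /M (bigD1 t) //= lerDl sumr_ge0 // => u _; apply: scheme_weight_ge0.
have M0 : 0 <= M := le_trans (scheme_weight_ge0 h_poly i0_min None) (weight_le_M None).
pose C : R := 1 + 2 * #|{: option (option {ffun 'I_n -> bool})}|%:R.
have C0 : 0 < C by rewrite /C ltr_pwDl ?mulr_ge0 ?ler0n.
pose delta := Num.min ((eps / C) ^+ 2) 1.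
have delta0 : 0 < delta by rewrite lt_min ltr01 andbT exprn_gt0 // divr_gt0.
have [p [np p_prime M_lt]] := exists_prime_ln_gt n (M / delta).
have L0 : 0 < ln p%:R :> R by apply: le_lt_trans M_lt; rewrite divr_ge0 // ltW.
pose d := M / ln p%:R.
have d0 : 0 <= d by rewrite divr_ge0 // ltW.
have [d_eps d1] : d < (eps / C) ^+ 2 /\ d < 1.
  have : d < delta by rewrite ltr_pdivrMr // mulrC -ltr_pdivrMr.
  by rewrite lt_min => /andP[].
pose pi (s : option (option (option {ffun 'I_n -> bool}))) : R :=
  if s is Some t then weight t / ln p%:R else 1 - d.
have pi_Some t : 0 <= pi (Some t) <= d.
  by rewrite divr_ge0 ?scheme_weight_ge0 ?(ltW L0) //= ler_pM2r ?invr_gt0 ?weight_le_M.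
have pi_distr : is_distr pi.
  split=> [[t|]|]; [by have /andP[] := pi_Some t | by rewrite /=; lra |].
  by rewrite sum_option /= -mulr_suml -/M /d; lra.
exists (fun x => entropy (mix_prob pi) (mix_var (Mn_scheme p i0) x)).
split=> [|x]; first exact: Mn_mix_entropic.
rewrite Mn_mix_entropyE // opprD addrCA subrr addr0 normrN ger0_norm ?sum_xlnx_le0 //.
apply: le_lt_trans (entropy_option_le _ erefl pi_Some) _; first by rewrite d0 ltW.
have : Num.sqrt d < eps / C.
  by rewrite -(ger0_norm (ltW (divr_gt0 eps0 C0))) -sqrtr_sqr ltr_sqrt // exprn_gt0 ?divr_gt0.
by rewrite -ltr_pdivlMl // mulrC.
Qed.
End Approximation.

Theorem theorem6 (R : realType) (n : nat) :
  (2 <= n)%N -> shannon_lattice R (@Mn_le n) (@Mn_join n) (@Mn_meet n).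
Proof.
move=> n2 h; split=> [h_poly eps eps0|].
  have [i0 _ i0_min] := arg_minP (atom_value h n2) (isT : xpredT (Mn_bot n2)).
  exact: polymatroid_approx h_poly i0 (fun j => i0_min j isT) eps eps0.
apply: entropic_closure_polymatroid; first exact: Mn_join_l.
- exact: Mn_meet_le_l.
- exact: Mn_meet_le_r.
Qed.
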